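(* Let $\bm{A}=[\bm{A}_1\ \bm{A}_2]\in\mathbb{R}^{m\times(n_1+n_2)}$ have full column rank with $\bm{A}_j^\top\bm{A}_j=\bm{I}_j$, $\bm{C}:=\bm{A}_2^\top\bm{A}_1\ne0$, and suppose $r:=\operatorname{rank}(\bm{C})<\min\{n_1,n_2\}$. Let $\gamma_1^*:=\frac{2}{1+\sqrt{1-\lambda_1(\bm{C}\bm{C}^\top)}}$ and $S_{11}:=[1,\infty)\times[1,\infty)$. Then $\rho(\bm{M}(\gamma_1^*,\gamma_1^* ))=\gamma_1^*-1$ and $\min_{(\gamma_1,\gamma_2)\in S_{11}}\rho(\bm{M}(\gamma_1,\gamma_2))=\gamma_1^*-1=\dfrac{1-\sqrt{1-\lambda_1(\bm{C}\bm{C}^\top)}}{1+\sqrt{1-\lambda_1(\bm{C}\bm{C}^\top)}}.$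
   Context: $\rho$: spectral radius; $\lambda_1$: largest eigenvalue. $\bm{M}(\gamma_1,\gamma_2)=\begin{bmatrix}(1-\gamma_1)\bm{I}_1&-\gamma_1\bm{C}^\top\\-\gamma_2(1-\gamma_1)\bm{C}&(1-\gamma_2)\bm{I}_2+\gamma_1\gamma_2\bm{C}\bm{C}^\top\end{bmatrix}$, the two-block gradient descent iteration matrix with stepsizes $\gamma_1,\gamma_2$. *)

From HB Require Import structures.
From mathcomp Require Import all_boot all_order all_algebra.
From mathcomp Require Import classical_sets reals.
From mathcomp Require Import complex.
Set Implicit Arguments. Unset Strict Implicit. Unset Printing Implicit Defensive.
Import Order.TTheory GRing.Theory Num.Theory.
Local Open Scope ring_scope.
Local Open Scope classical_set_scope.

(* The eigenvalue set is finite and nonempty for n > 0. *)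
Definition spectral_radius (R : realType) (n : nat) (M : 'M[R]_n) : R :=
  sup [set complex.Re `|z| | z in
        [set z : R[i] | eigenvalue (map_mx (fun x : R => (x%:C)%C) M) z]].

Definition lambda_max (R : realType) (n : nat) (M : 'M[R]_n) : R :=
  sup [set x : R | eigenvalue M x].

Definition Mgd (R : realType) (n1 n2 : nat) (C : 'M[R]_(n2, n1)) (g1 g2 : R)
  : 'M[R]_(n1 + n2) :=
  block_mx ((1 - g1)%:M) (- g1 *: C^T)
           (- (g2 * (1 - g1)) *: C) ((1 - g2)%:M + (g1 * g2) *: (C *m C^T)).

From HB Require Import structures.
From mathcomp Require Import all_boot all_order all_algebra.
From mathcomp Require Import boolp classical_sets reals complex.
From mathcomp.algebra_tactics Require Import ring lra.
Set Implicit Arguments. Unset Strict Implicit. Unset Printing Implicit Defensive.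
Import Order.TTheory GRing.Theory Num.Theory.
Local Open Scope ring_scope.

(* The iteration matrix M(g1, g2) has the eigenvalue 1 - g1 on the kernel of C
   and 1 - g2 on the kernel of C^T, both nontrivial because rank C < min(n1, n2).
   Every other eigenvalue z satisfies (z - 1 + g1) (z - 1 + g2) = g1 g2 w z for
   an eigenvalue w of C C^T, and Bessel's inequality for the orthonormal columns
   of A1 and A2 puts w in [0, 1].  The stepsize g is tuned so that
   lam g^2 = 4 (g - 1): for g1 = g2 = g all these quadratics have nonpositive
   discriminant, so their roots have modulus at most g - 1.  For g1, g2 >= 1,
   either 1 - g1 or 1 - g2 already has modulus at least g - 1, or the quadratic
   for w = lam is nonpositive at g - 1 and so has a real root >= g - 1. *)

Section FieldEigenvalues.
Variable F : fieldType.

Lemma char_poly_trmx n (A : 'M[F]_n) : char_poly A^T = char_poly A.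
Proof.
rewrite /char_poly -det_tr; congr (\det _).
by apply/matrixP => i j; rewrite !mxE eq_sym.
Qed.

Lemma eigenvalue_colP n (A : 'M[F]_n) a :
  reflect (exists2 v : 'cV_n, A *m v = a *: v & v != 0) (eigenvalue A a).
Proof.
rewrite eigenvalue_root_char -char_poly_trmx -eigenvalue_root_char.
apply: (iffP eigenvalueP) => [[u uA u0]|[v Av v0]].
  by exists u^T; rewrite ?trmx_eq0 // -[A]trmxK -trmx_mul uA linearZ.
by exists v^T; rewrite ?trmx_eq0 // -trmx_mul Av linearZ.
Qed.

Lemma mxrank_lt_kernel m n (A : 'M[F]_(m, n)) :
  (\rank A < n)%N -> exists2 x : 'cV_n, A *m x = 0 & x != 0.
Proof.
move=> rkA; have /rowV0Pn[u /sub_kermxP uA u0] : kermx A^T != 0.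
  by rewrite -mxrank_eq0 mxrank_ker mxrank_tr -lt0n subn_gt0.
by exists u^T; rewrite ?trmx_eq0 // -(trmxK A) -trmx_mul uA trmx0.
Qed.
End FieldEigenvalues.

Section BlockIteration.
Variables (F : fieldType) (n1 n2 : nat) (C : 'M[F]_(n2, n1)).

(* [Mgd] over an arbitrary field, so that it can be complexified;
   [Mgd C g1 g2] is [gd_mx C g1 g2] by definition. *)
Definition gd_mx (g1 g2 : F) : 'M[F]_(n1 + n2) :=
  block_mx ((1 - g1)%:M) (- g1 *: C^T)
           (- (g2 * (1 - g1)) *: C) ((1 - g2)%:M + (g1 * g2) *: (C *m C^T)).

Lemma eigenvalue_gd_mx_kerC g1 g2 : (\rank C < n1)%N -> eigenvalue (gd_mx g1 g2) (1 - g1).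
Proof.
move=> /mxrank_lt_kernel[x Cx x0]; apply/eigenvalue_colP; exists (col_mx x 0).
  rewrite /gd_mx mul_block_col !mulmx0 !addr0 mul_scalar_mx -scalemxAl Cx.
  by rewrite scaler0 scale_col_mx scaler0.
by rewrite col_mx_eq0 negb_and x0.
Qed.

Lemma eigenvalue_gd_mx_kerCt g1 g2 : (\rank C < n2)%N -> eigenvalue (gd_mx g1 g2) (1 - g2).
Proof.
rewrite -mxrank_tr => /mxrank_lt_kernel[y CTy y0]; apply/eigenvalue_colP.
exists (col_mx 0 y); last by rewrite col_mx_eq0 negb_and y0 orbT.
rewrite /gd_mx mul_block_col !mulmx0 !add0r -scalemxAl CTy scaler0 mulmxDl.
rewrite mul_scalar_mx -scalemxAl -mulmxA CTy mulmx0 scaler0 addr0.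
by rewrite scale_col_mx scaler0.
Qed.

Lemma eigenvalue_gd_mx_root g1 g2 w z (y : 'cV_n2) :
  y != 0 -> C *m C^T *m y = w *: y -> w != 0 -> g1 != 0 ->
  z ^+ 2 - (2 - g1 - g2 + g1 * g2 * w) * z + (1 - g1) * (1 - g2) = 0 ->
  eigenvalue (gd_mx g1 g2) z.
Proof.
move=> y0 CCTy w0 g10 hz; set x := C^T *m y.
have Cx : C *m x = w *: y by rewrite /x mulmxA.
have x0 : x != 0.
  apply: contraNneq y0 => x0; move/eqP: Cx; rewrite x0 mulmx0 eq_sym.
  by rewrite scaler_eq0 (negbTE w0).
apply/eigenvalue_colP; exists (col_mx (g1 *: x) ((1 - g1 - z) *: y)); last first.
  by rewrite col_mx_eq0 scaler_eq0 negb_and negb_or g10 x0.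
rewrite /gd_mx mul_block_col scale_col_mx; congr col_mx.
  rewrite mul_scalar_mx -!scalemxAl -!scalemxAr -/x !scalerA -scalerDl.
  by congr (_ *: _); ring.
rewrite mulmxDl mul_scalar_mx -!scalemxAl -!scalemxAr Cx -mulmxA -/x Cx.
rewrite !scalerA -!scalerDl; congr (_ *: _).
by apply/eqP; rewrite -subr_eq0; apply/eqP; rewrite -hz; ring.
Qed.

Lemma gd_mx_eigenvectorE g1 g2 z (x : 'cV_n1) (y : 'cV_n2) :
  gd_mx g1 g2 *m col_mx x y = z *: col_mx x y ->
  (z - (1 - g2)) *: y = - (g2 * z) *: (C *m x) /\
  ((z - (1 - g1)) * (z - (1 - g2))) *: x = (g1 * g2 * z) *: (C^T *m (C *m x)).
Proof.
rewrite /gd_mx mul_block_col scale_col_mx => /eq_col_mx[ex ey].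
have CTy : g1 *: (C^T *m y) = (1 - g1 - z) *: x.
  move: ex; rewrite mul_scalar_mx -scalemxAl scaleNr => ex.
  by rewrite [RHS]scalerBl -ex opprB addrC subrK.
have CCTy : (g1 * g2) *: (C *m C^T *m y) = (g2 * (1 - g1 - z)) *: (C *m x).
  by rewrite mulrC -!scalerA -mulmxA scalemxAr CTy -scalemxAr.
have ey' : (z - (1 - g2)) *: y = - (g2 * z) *: (C *m x).
  move: ey; rewrite mulmxDl mul_scalar_mx -!scalemxAl CCTy => ey.
  rewrite scalerBl -ey addrCA [_ *: y + _]addrC addrK -scalerDl.
  by congr (_ *: _); ring.
split=> //.
have e : ((z - (1 - g2)) * (1 - g1 - z)) *: x = (g1 * - (g2 * z)) *: (C^T *m (C *m x)).
  rewrite -scalerA -CTy scalerA mulrC -[in LHS]scalerA [in LHS]scalemxAr ey'.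
  by rewrite -scalemxAr scalerA.
have -> : (z - (1 - g1)) * (z - (1 - g2)) = - ((z - (1 - g2)) * (1 - g1 - z)) by ring.
have -> : g1 * g2 * z = - (g1 * - (g2 * z)) by ring.
by rewrite !scaleNr e.
Qed.

Lemma gd_mx_eigenvalue_cases g1 g2 z : g1 != 0 -> g2 != 0 ->
  eigenvalue (gd_mx g1 g2) z ->
  [\/ z = 1 - g1, z = 1 - g2 |
      exists2 w, eigenvalue (C *m C^T) w &
        (z - (1 - g1)) * (z - (1 - g2)) = g1 * g2 * w * z].
Proof.
move=> g10 g20 /eigenvalue_colP[v Mv v0].
have [z1|z1] := eqVneq z (1 - g1); first by constructor 1.
have [z2|z2] := eqVneq z (1 - g2); first by constructor 2.
constructor 3.
move: Mv v0; rewrite -[v]vsubmxK; set x := usubmx v; set y := dsubmx v.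
move=> /gd_mx_eigenvectorE[ey ex]; rewrite col_mx_eq0 negb_and => xy0.
have k0 : (z - (1 - g1)) * (z - (1 - g2)) != 0 by rewrite mulf_neq0 // subr_eq0.
have x0 : x != 0.
  apply/eqP => x0; move: xy0; rewrite x0 eqxx /= => /negP; apply.
  by move/eqP: ey; rewrite x0 mulmx0 scaler0 scaler_eq0 subr_eq0 (negbTE z2).
have z0 : z != 0.
  apply: contraNneq k0 => z0; move/eqP: ex; rewrite z0 mulr0 scale0r.
  by rewrite scaler_eq0 (negbTE x0) orbF.
have u0 : C *m x != 0.
  apply: contraNneq k0 => u0; move/eqP: ex; rewrite u0 mulmx0 scaler0.
  by rewrite scaler_eq0 (negbTE x0) orbF.
set w := (z - (1 - g1)) * (z - (1 - g2)) / (g1 * g2 * z).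
have d0 : g1 * g2 * z != 0 by rewrite !mulf_neq0.
exists w; last by rewrite /w; field; rewrite ?d0 ?g10 ?g20 ?z0.
apply/eigenvalue_colP; exists (C *m x) => //.
have CTu : C^T *m (C *m x) = w *: x by rewrite /w mulrC -scalerA ex scalerA mulVf ?scale1r.
by rewrite -mulmxA CTu -scalemxAr.
Qed.
End BlockIteration.

Lemma map_gd_mx (F K : fieldType) (f : {rmorphism F -> K}) n1 n2
    (C : 'M[F]_(n2, n1)) g1 g2 :
  map_mx f (gd_mx C g1 g2) = gd_mx (map_mx f C) (f g1) (f g2).
Proof.
rewrite /gd_mx map_block_mx !(map_mxD, map_mxZ, map_mxM, map_scalar_mx, map_trmx).
by rewrite !(rmorphN, rmorphM, rmorphB, rmorph1).
Qed.

Section GramEigenvalues.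
Variable K : numClosedFieldType.
Local Open Scope sesquilinear_scope.

Lemma dotmx_mulmxl n p (u : 'rV[K]_n) (v : 'rV[K]_p) (A : 'M[K]_(n, p)) :
  dotmx (u *m A) v = dotmx u (v *m A^t*).
Proof. by rewrite !dotmxE -mulmxA trmx_mul map_mxM trmxCK. Qed.

Lemma dotmx_mul_adj_isometry n p (u : 'rV[K]_n) (A : 'M[K]_(p, n)) :
  A^t* *m A = 1%:M -> dotmx (u *m A^t*) (u *m A^t*) = dotmx u u.
Proof. by move=> AA; rewrite dotmx_mulmxl trmxCK -mulmxA AA mulmx1. Qed.

Lemma dotmx_mul_orthonormal_le n p (u : 'rV[K]_n) (A : 'M[K]_(n, p)) :
  A^t* *m A = 1%:M -> dotmx (u *m A) (u *m A) <= dotmx u u.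
Proof.
move=> AA; set v := u *m A.
have duP : dotmx u (v *m A^t*) = dotmx v v by rewrite -dotmx_mulmxl.
have := dnorm_ge0 (@dotmx K n) (u - v *m A^t*).
rewrite dnormB /= duP dotmx_mul_adj_isometry // geC0_conj ?dnorm_ge0 //.
by rewrite opprD addrA addrK subr_ge0.
Qed.

Lemma eigenvalue_mul_adjE n p (D : 'M[K]_(n, p)) (v : 'rV[K]_n) w :
  v *m (D *m D^t*) = w *: v -> w * dotmx v v = dotmx (v *m D) (v *m D).
Proof.
move=> vDD; have := dotmx_mulmxl (v *m D) v (D^t*).
by rewrite trmxCK -mulmxA vDD => <-; rewrite !dotmxE -scalemxAl [RHS]mxE.
Qed.

Lemma eigenvalue_mul_adj_ge0 n p (D : 'M[K]_(n, p)) w :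
  eigenvalue (D *m D^t*) w -> 0 <= w.
Proof.
case/eigenvalueP => v /eigenvalue_mul_adjE wv v0.
have v_gt0 : 0 < dotmx v v by rewrite dnorm_gt0.
by rewrite -(pmulr_lge0 _ v_gt0) wv dnorm_ge0.
Qed.

Lemma eigenvalue_cross_gram_le1 m n1 n2 (A1 : 'M[K]_(m, n1)) (A2 : 'M[K]_(m, n2)) w :
  A1^t* *m A1 = 1%:M -> A2^t* *m A2 = 1%:M ->
  eigenvalue ((A2^t* *m A1) *m (A2^t* *m A1)^t*) w -> w <= 1.
Proof.
move=> A11 A22 /eigenvalueP[v /eigenvalue_mul_adjE wv v0].
have v_gt0 : 0 < dotmx v v by rewrite dnorm_gt0.
rewrite -(ler_pM2r v_gt0) mul1r wv mulmxA.
by rewrite -[leRHS](dotmx_mul_adj_isometry v A22) dotmx_mul_orthonormal_le.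
Qed.
End GramEigenvalues.

Section Quadratics.
Variable R : realType.
Local Open Scope complex_scope.

Lemma quadratic_root_ge (t P c : R) : c ^+ 2 - t * c + P <= 0 ->
  exists2 z, z ^+ 2 - t * z + P = 0 & c <= z.
Proof.
move=> pc; set q := Num.sqrt (t ^+ 2 - 4 * P).
have disc : (2 * c - t) ^+ 2 <= t ^+ 2 - 4 * P by nra.
have qq : q ^+ 2 = t ^+ 2 - 4 * P by rewrite sqr_sqrtr // (le_trans (sqr_ge0 _) disc).
have q_ge : 2 * c - t <= q.
  apply: le_trans (ler_norm _) _; rewrite -sqrtr_sqr ler_sqrt //.
  exact: le_trans (sqr_ge0 _) disc.
exists ((t + q) / 2); last lra.
have -> : ((t + q) / 2) ^+ 2 - t * ((t + q) / 2) + P = (q ^+ 2 - (t ^+ 2 - 4 * P)) / 4.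
  by field.
by rewrite qq subrr mul0r.
Qed.

Lemma quadratic_root_norm_le (a k : R) (z : R[i]) : a <= 0 -> 0 <= k <= - 4 * a ->
  (z - a%:C) ^+ 2 = k%:C * z -> complex.Re `|z| <= - a.
Proof.
case: z => x y a0 /andP[k0 ka] /(congr1 (fun u => (complex.Re u, complex.Im u))).
simpc => -[hre him].
have sq : x ^+ 2 + y ^+ 2 <= a ^+ 2.
  (* for y != 0 the imaginary part forces x = a + k / 2, and then |z| = |a| *)
  have [y0|y0] := eqVneq y 0.
    rewrite y0 mulr0 subr0 in hre; rewrite y0 expr0n addr0.
    have hx : (x + a) * (x + a) = x * (k + 4 * a) by nra.
    have [x0|x0] := leP 0 x.
      have : (x + a) * (x + a) <= 0 by rewrite hx; nra.
      nra.
    have : (x - a) * (x - a) <= 0 by nra.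
    nra.
  have ex : 2 * (x - a) = k by apply: (mulIf y0); nra.
  nra.
rewrite /= -[leRHS]ger0_norm ?oppr_ge0 // -sqrtr_sqr sqrrN.
by rewrite ler_sqrt ?sqr_ge0.
Qed.

Lemma gd_char_quadratic_nonpos (g g1 g2 lam : R) : 1 <= g <= 2 ->
  lam * g ^+ 2 = 4 * (g - 1) -> 1 <= g1 <= g -> 1 <= g2 <= g ->
  (g - 1) ^+ 2 - (2 - g1 - g2 + g1 * g2 * lam) * (g - 1) + (1 - g1) * (1 - g2) <= 0.
Proof.
move=> /andP[g_ge1 g_le2] hlam /andP[g1_ge1 g1_le] /andP[g2_ge1 g2_le].
set c := g - 1; set u := g1 - 1; set v := g2 - 1.
set H := (c - u) * (c - v) * ((1 - c) * (3 + c))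
         + 2 * (1 + c) * (1 - c) * (u * (c - v) + (c - u) * v).
have H_ge0 : 0 <= H.
  have [u0 v0 cu cv] : [/\ 0 <= u, 0 <= v, 0 <= c - u & 0 <= c - v].
    by split; rewrite /u /v /c; lra.
  have [c1 c1' c3] : [/\ 0 <= 1 - c, 0 <= 1 + c & 0 <= 3 + c] by split; rewrite /c; lra.
  apply: addr_ge0; first by rewrite !mulr_ge0.
  by rewrite !mulr_ge0 // addr_ge0 // mulr_ge0.
have -> : c ^+ 2 - (2 - g1 - g2 + g1 * g2 * lam) * c + (1 - g1) * (1 - g2)
          = - H / g ^+ 2.
  apply: (canRL (mulfK _)); first by rewrite sqrf_eq0; apply/eqP; lra.
  transitivity (- H - c * g1 * g2 * (lam * g ^+ 2 - 4 * (g - 1))).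
    by rewrite /H /c /u /v; ring.
  by rewrite hlam subrr mulr0 subr0.
by rewrite mulNr oppr_le0 divr_ge0 ?sqr_ge0.
Qed.

Lemma opt_stepsize_spec (lam : R) : 0 <= lam <= 1 ->
  let s := Num.sqrt (1 - lam) in let g := 2 / (1 + s) in
  [/\ 1 <= g <= 2, lam * g ^+ 2 = 4 * (g - 1) & g - 1 = (1 - s) / (1 + s)].
Proof.
move=> /andP[lam_ge0 lam_le1] s g.
have s_ge0 : 0 <= s := sqrtr_ge0 _.
have ss : s ^+ 2 = 1 - lam by rewrite sqr_sqrtr // subr_ge0.
have s_le1 : s <= 1 by rewrite -(ler_pXn2r (_ : 0 < 2)%N) ?nnegrE ?expr1n //; lra.
have s1_neq0 : 1 + s != 0 by apply/eqP; lra.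
have gs : g * (1 + s) = 2 by rewrite /g mulfVK.
split; first (apply/andP; split; nra); last by rewrite /g; field.
have -> : lam = 1 - s ^+ 2 by lra.
nra.
Qed.
End Quadratics.

Lemma eigenvalues_finite (K : closedFieldType) n (B : 'M[K]_n) :
  exists rs : seq K, forall z, eigenvalue B z -> z \in rs.
Proof.
have [rs csB] := closed_field_poly_normal (char_poly B).
exists rs => z; rewrite eigenvalue_root_char csB (monicP (char_poly_monic B)).
by rewrite scale1r root_prod_XsubC.
Qed.

Section RealSpectra.
Variable R : realType.
Local Open Scope classical_set_scope.
Local Open Scope complex_scope.
Local Notation mxC := (map_mx (real_complex R)).

Lemma seq_max (s : seq R) : s != [::] -> exists2 m, m \in s & {in s, forall x, x <= m}.
Proof.
elim: s => [//|x s IH] _; have [->|/IH[m ms mmax]] := eqVneq s [::].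
  by exists x; rewrite ?inE // => y; rewrite inE => /eqP ->.
have [xm|mx] := leP x m.
  by exists m; rewrite ?inE ?ms ?orbT // => y; rewrite inE => /predU1P[->|/mmax].
exists x; rewrite ?inE ?eqxx // => y; rewrite inE => /predU1P[->//|/mmax ym].
exact: le_trans ym (ltW mx).
Qed.

Lemma sup_ubound_finite (E : set R) (s : seq R) :
  E `<=` [set x | x \in s] -> ubound E (sup E).
Proof.
move=> Es x Ex; apply: sup_upper_bound => //; split; first by exists x.
by exists (\big[Num.max/0]_(y <- s) y) => y /Es ys; exact: le_bigmax_seq.
Qed.

Lemma sup_pred_mem (P : pred R) (s : seq R) :
  (forall x, P x -> x \in s) -> (exists x, P x) -> P (sup [set x | P x]).
Proof.
move=> Ps [x Px]; have /seq_max[m] : [seq y <- s | P y] != [::].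
  by rewrite -has_filter; apply/hasP; exists x; rewrite ?Ps.
rewrite mem_filter => /andP[Pm _] mmax.
suff -> : sup [set x | P x] = m by [].
apply/le_anti/andP; split; last exact: (@sup_ubound_finite _ s).
by apply: ge_sup; [exists m | move=> y Py; apply: mmax; rewrite mem_filter Py Ps].
Qed.

Lemma eigenvalue_real_finite n (B : 'M[R]_n) :
  exists s : seq R, forall r, eigenvalue B r -> r \in s.
Proof.
have [rs rsP] := eigenvalues_finite (mxC B).
exists (map (@complex.Re R) rs) => r Br; apply/mapP; exists r%:C => //.
by apply: rsP; rewrite eigenvalue_map.
Qed.

Lemma lambda_max_ge n (B : 'M[R]_n) r : eigenvalue B r -> r <= lambda_max B.
Proof. by have [s sP] := eigenvalue_real_finite B; exact: (@sup_ubound_finite _ s). Qed.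

Lemma lambda_max_eigenvalue n (B : 'M[R]_n) :
  lambda_max B = 0 \/ eigenvalue B (lambda_max B).
Proof.
have [s sP] := eigenvalue_real_finite B.
have [Bne|Bempty] := pselect (exists r, eigenvalue B r).
  by right; exact: sup_pred_mem sP Bne.
left; rewrite /lambda_max; suff -> : [set x | eigenvalue B x] = set0 by rewrite sup0.
by apply/seteqP; split => // x Bx; apply: Bempty; exists x.
Qed.

Lemma Re_normC_real (r : R) : complex.Re `|r%:C| = `|r|.
Proof. by rewrite normc_def /= expr0n addr0 sqrtr_sqr. Qed.

Lemma spectral_radius_ge n (M : 'M[R]_n) z :
  eigenvalue (mxC M) z -> complex.Re `|z| <= spectral_radius M.
Proof.
move=> Mz; have [rs rsP] := eigenvalues_finite (mxC M).
apply: (@sup_ubound_finite _ (map (fun z => complex.Re `|z|) rs)); last by exists z.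
by move=> _ [y My <-]; apply: map_f; apply: rsP.
Qed.

Lemma spectral_radius_ge_real n (M : 'M[R]_n) r :
  eigenvalue M r -> `|r| <= spectral_radius M.
Proof.
by rewrite -(eigenvalue_map (real_complex R)) -Re_normC_real; apply: spectral_radius_ge.
Qed.

Lemma adj_mxC m n (A : 'M[R]_(m, n)) : ((mxC A)^t*)%sesqui = mxC A^T.
Proof. by apply/matrixP => i j; rewrite !mxE; exact: conjc_real. Qed.

Lemma mxC_mul_trmx m n (A : 'M[R]_(m, n)) : mxC (A *m A^T) = (mxC A *m (mxC A)^t*)%sesqui.
Proof. by rewrite map_mxM adj_mxC. Qed.

Lemma mxC_isometry m n (A : 'M[R]_(m, n)) :
  A^T *m A = 1%:M -> ((mxC A)^t* *m mxC A)%sesqui = 1%:M.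
Proof. by move=> /(congr1 mxC); rewrite map_mxM map_scalar_mx rmorph1 -adj_mxC. Qed.

Lemma eigenvalue_mxC_mul_tr n p (D : 'M[R]_(n, p)) w :
  eigenvalue (mxC (D *m D^T)) w ->
  exists r, [/\ w = r%:C, 0 <= r & eigenvalue (D *m D^T) r].
Proof.
move=> Dw; have w_ge0 : 0 <= w.
  by apply: (@eigenvalue_mul_adj_ge0 _ _ _ (mxC D)); rewrite -mxC_mul_trmx.
have ew : w = (complex.Re w)%:C.
  by rewrite {1}[w]complexE ger0_Im // rmorph0 mulr0 addr0.
exists (complex.Re w); split => //; first by rewrite -lecR -ew.
by move: Dw; rewrite ew eigenvalue_map.
Qed.

Lemma eigenvalue_cross_gram_real m n1 n2 (A1 : 'M[R]_(m, n1)) (A2 : 'M[R]_(m, n2)) r :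
  A1^T *m A1 = 1%:M -> A2^T *m A2 = 1%:M ->
  eigenvalue ((A2^T *m A1) *m (A2^T *m A1)^T) r -> 0 <= r <= 1.
Proof.
move=> A11 A22; rewrite -(eigenvalue_map (real_complex R)) => Er.
have [r' [/complexI <- r_ge0 _]] := eigenvalue_mxC_mul_tr Er.
apply/andP; split => //; rewrite -lecR rmorph1.
apply: (eigenvalue_cross_gram_le1 (mxC_isometry A11) (mxC_isometry A22)).
by move: Er; rewrite mxC_mul_trmx map_mxM -adj_mxC.
Qed.
End RealSpectra.

Section GDSpectralRadius.
Variables (R : realType) (n1 n2 : nat) (C : 'M[R]_(n2, n1)).
Local Open Scope complex_scope.

Lemma gd_opt_eigenvalue_norm_le g lam z : 1 <= g -> lam * g ^+ 2 = 4 * (g - 1) ->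
  (forall r, eigenvalue (C *m C^T) r -> r <= lam) ->
  eigenvalue (map_mx (real_complex R) (Mgd C g g)) z -> complex.Re `|z| <= g - 1.
Proof.
move=> g_ge1 hlam lamP; rewrite -[Mgd C g g]/(gd_mx C g g) map_gd_mx.
have g0 : g%:C != 0 by rewrite fmorph_eq0; apply/eqP; lra.
have one_sub_g : 1 - g%:C = (1 - g)%:C by rewrite rmorphB rmorph1.
have norm_one_sub_g : complex.Re `|(1 - g)%:C| = g - 1.
  by rewrite Re_normC_real ler0_norm ?opprB //; lra.
case/gd_mx_eigenvalue_cases => // [->|->|[w Cw zw]]; rewrite ?one_sub_g ?norm_one_sub_g //.
move: Cw zw; rewrite map_trmx -map_mxM.
move=> /eigenvalue_mxC_mul_tr[r [-> r_ge0 /lamP r_le]] zr.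
rewrite -[g - 1]opprB; apply: (quadratic_root_norm_le (k := g ^+ 2 * r)).
- lra.
- apply/andP; split; first by rewrite mulr_ge0 ?sqr_ge0.
  have : g ^+ 2 * r <= g ^+ 2 * lam by rewrite ler_wpM2l ?sqr_ge0.
  lra.
by rewrite -one_sub_g expr2 zr rmorphM rmorphXn; congr (_ * _); ring.
Qed.

Lemma spectral_radius_Mgd_opt g lam : (\rank C < n1)%N ->
  (forall r, eigenvalue (C *m C^T) r -> r <= lam) ->
  1 <= g -> lam * g ^+ 2 = 4 * (g - 1) -> spectral_radius (Mgd C g g) = g - 1.
Proof.
move=> rk1 lamP g_ge1 hlam; have E1 := eigenvalue_gd_mx_kerC g g rk1.
apply/le_anti/andP; split; last first.
  by have := spectral_radius_ge_real E1; rewrite ler0_norm ?opprB //; lra.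
apply: ge_sup.
  exists `|1 - g|, (1 - g)%:C; last exact: Re_normC_real.
  by move: E1; rewrite -(eigenvalue_map (real_complex R)).
by move=> _ [z Mz <-]; exact: gd_opt_eigenvalue_norm_le g_ge1 hlam lamP Mz.
Qed.

Lemma spectral_radius_Mgd_ge g g1 g2 lam :
  (\rank C < n1)%N -> (\rank C < n2)%N -> lam = 0 \/ eigenvalue (C *m C^T) lam ->
  1 <= g <= 2 -> lam * g ^+ 2 = 4 * (g - 1) -> 1 <= g1 -> 1 <= g2 ->
  g - 1 <= spectral_radius (Mgd C g1 g2).
Proof.
move=> rk1 rk2 lamP g12 hlam g1_ge1 g2_ge1.
have [g_le_g1|g1_lt] := leP g g1.
  have := spectral_radius_ge_real (eigenvalue_gd_mx_kerC g1 g2 rk1).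
  by rewrite ler0_norm; lra.
have [g_le_g2|g2_lt] := leP g g2.
  have := spectral_radius_ge_real (eigenvalue_gd_mx_kerCt g1 g2 rk2).
  by rewrite ler0_norm; lra.
have lam_neq0 : lam != 0 by apply/eqP => lam0; move: hlam; rewrite lam0 mul0r; lra.
have /eigenvalue_colP[y CCy y0] : eigenvalue (C *m C^T) lam.
  by case: lamP => // lam0; rewrite lam0 eqxx in lam_neq0.
have g1_neq0 : g1 != 0 by apply/eqP; lra.
have g1P : 1 <= g1 <= g by rewrite g1_ge1 ltW.
have g2P : 1 <= g2 <= g by rewrite g2_ge1 ltW.
have [z zroot g_le_z] := quadratic_root_ge (gd_char_quadratic_nonpos g12 hlam g1P g2P).
have := spectral_radius_ge_real (eigenvalue_gd_mx_root y0 CCy lam_neq0 g1_neq0 zroot).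
by have := ler_norm z; lra.
Qed.
End GDSpectralRadius.

Theorem mainTheorem15 (R : realType) (m n1 n2 : nat)
  (A1 : 'M[R]_(m, n1)) (A2 : 'M[R]_(m, n2)) :
  \rank (row_mx A1 A2) = (n1 + n2)%N ->
  A1^T *m A1 = 1%:M ->
  A2^T *m A2 = 1%:M ->
  A2^T *m A1 != 0 ->
  (\rank (A2^T *m A1) < minn n1 n2)%N ->
  let C := A2^T *m A1 in
  let lam := lambda_max (C *m C^T) in
  let g := 2 / (1 + Num.sqrt (1 - lam)) in
  spectral_radius (Mgd C g g) = g - 1 /\
  (forall g1 g2 : R, 1 <= g1 -> 1 <= g2 -> g - 1 <= spectral_radius (Mgd C g1 g2)) /\
  g - 1 = (1 - Num.sqrt (1 - lam)) / (1 + Num.sqrt (1 - lam)).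
Proof.
move=> _ A11 A22 _ rkC C lam g.
have [rk1 rk2] : (\rank C < n1)%N /\ (\rank C < n2)%N by apply/andP; rewrite -leq_min.
have lamE : lam = 0 \/ eigenvalue (C *m C^T) lam := lambda_max_eigenvalue _.
have lam01 : 0 <= lam <= 1.
  by case: lamE => [->|/(eigenvalue_cross_gram_real A11 A22)//]; rewrite lexx ler01.
have [gP hlam gE] := opt_stepsize_spec lam01.
split; last split=> // g1 g2; last exact: spectral_radius_Mgd_ge rk1 rk2 lamE gP hlam.
apply: spectral_radius_Mgd_opt rk1 _ _ hlam; first exact: lambda_max_ge.
by case/andP: gP.
Qed.
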